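(* Let $\mathcal{E}\subseteq \mathrm{CL}(\mathbb{R})$. The following conditions are equivalent: (1) there exists $\mathcal{G}\subseteq C(\mathbb{R},\mathbb{R})$ such that $\mathcal{E}\in \mathcal{K}_\mathcal{G}$; (2) $\mathcal{E}$ is hereditary.
   Context: $\mathrm{CL}(\mathbb{R})$ denotes the family of all closed subsets of $\mathbb{R}$ and $C(\mathbb{R},\mathbb{R})$ the set of all continuous functions $\mathbb{R}\to\mathbb{R}$. For $\mathcal{G}\subseteq C(\mathbb{R},\mathbb{R})$ let $R_\mathcal{G}=\{(f,E)\in C(\mathbb{R},\mathbb{R})\times\mathrm{CL}(\mathbb{R}):(\exists g\in\mathcal{G})\, f\restriction E=g\restriction E\}$. For $\mathcal{F}\subseteq C(\mathbb{R},\mathbb{R})$ and $\mathcal{E}\subseteq\mathrm{CL}(\mathbb{R})$ put $E_\mathcal{G}(\mathcal{F})=\{E\in\mathrm{CL}(\mathbb{R}):(\forall f\in\mathcal{F})\,(f,E)\in R_\mathcal{G}\}$ and $F_\mathcal{G}(\mathcal{E})=\{f\in C(\mathbb{R},\mathbb{R}):(\forall E\in\mathcal{E})\,(f,E)\in R_\mathcal{G}\}$. Let $\mathcal{K}_\mathcal{G}=\{E_\mathcal{G}(\mathcal{F}):\mathcal{F}\subseteq C(\mathbb{R},\mathbb{R})\}$ (equivalently, the families $\mathcal{E}$ with $E_\mathcal{G}(F_\mathcal{G}(\mathcal{E}))=\mathcal{E}$). A family $\mathcal{E}\subseteq\mathrm{CL}(\mathbb{R})$ is hereditary if for all $D,E\in\mathrm{CL}(\mathbb{R})$,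 $D\subseteq E\in\mathcal{E}$ implies $D\in\mathcal{E}$. *)

From Stdlib Require Export Reals.
Open Scope R_scope.

Definition CL (E : R -> Prop) : Prop := closed_set E.

Definition Cont (f : R -> R) : Prop := continuity f.

Definition R_G (G : (R -> R) -> Prop) (f : R -> R) (E : R -> Prop) : Prop :=
  exists g, G g /\ forall x, E x -> f x = g x.

Definition E_G (G : (R -> R) -> Prop) (F : (R -> R) -> Prop) : (R -> Prop) -> Prop :=
  fun E => CL E /\ forall f, F f -> R_G G f E.

Definition F_G (G : (R -> R) -> Prop) (Es : (R -> Prop) -> Prop) : (R -> R) -> Prop :=
  fun f => Cont f /\ forall E, Es E -> R_G G f E.

(* Es belongs to K_G : Es = E_G(F) for some F ⊆ C(R,R) (equality of families
   taken extensionally). *)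
Definition in_K_G (G : (R -> R) -> Prop) (Es : (R -> Prop) -> Prop) : Prop :=
  exists F : (R -> R) -> Prop, (forall f, F f -> Cont f) /\
    forall E, Es E <-> E_G G F E.

Definition hereditary (Es : (R -> Prop) -> Prop) : Prop :=
  forall D E : R -> Prop, CL D -> CL E -> (forall x, D x -> E x) -> Es E -> Es D.

(* Every family of the form E_G(F) is hereditary, since agreeing with g on E
   implies agreeing with g on any subset of E.  Conversely, a hereditary family
   Es is E_G({0}) for G the continuous functions all of whose closed vanishing
   sets lie in Es: the distance to a closed set E in Es is such a function and
   vanishes exactly on E. *)
From Stdlib Require Import Reals Lra Classical.
Open Scope R_scope.

Section DistanceToSet.

Variable E : R -> Prop.
Hypothesis E_inhabited : exists y, E y.

Definition neg_dists (x : R) (r : R) : Prop := exists y, E y /\ r = - Rabs (x - y).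

Lemma neg_dists_bound (x : R) : bound (neg_dists x).
Proof.
  exists 0; intros r [y [_ ->]].
  pose proof (Rabs_pos (x - y)); lra.
Qed.

Lemma neg_dists_inhabited (x : R) : exists r, neg_dists x r.
Proof.
  destruct E_inhabited as [y Ey].
  exists (- Rabs (x - y)), y; auto.
Qed.

Definition dist_set (x : R) : R :=
  - proj1_sig (completeness (neg_dists x) (neg_dists_bound x) (neg_dists_inhabited x)).

Lemma dist_set_lub (x : R) : is_lub (neg_dists x) (- dist_set x).
Proof.
  unfold dist_set; rewrite Ropp_involutive.
  destruct completeness; assumption.
Qed.

Lemma dist_set_le (x y : R) : E y -> dist_set x <= Rabs (x - y).
Proof.
  intros Ey; destruct (dist_set_lub x) as [ub _].
  enough (- Rabs (x - y) <= - dist_set x) by lra.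
  apply ub; exists y; auto.
Qed.

Lemma dist_set_glb (x d : R) :
  (forall y, E y -> d <= Rabs (x - y)) -> d <= dist_set x.
Proof.
  intros Hd; destruct (dist_set_lub x) as [_ least].
  enough (- dist_set x <= - d) by lra.
  apply least; intros r [y [Ey ->]].
  specialize (Hd y Ey); lra.
Qed.

Lemma dist_set_ge0 (x : R) : 0 <= dist_set x.
Proof. apply dist_set_glb; intros y _; apply Rabs_pos. Qed.

Lemma dist_set_lipschitz (x x' : R) : dist_set x <= dist_set x' + Rabs (x - x').
Proof.
  enough (dist_set x - Rabs (x - x') <= dist_set x') by lra.
  apply dist_set_glb; intros y Ey.
  pose proof (dist_set_le x y Ey).
  pose proof (Rabs_triang (x - x') (x' - y)) as tri.
  replace (x - x' + (x' - y)) with (x - y) in tri by ring.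
  lra.
Qed.

Lemma continuity_dist_set : continuity dist_set.
Proof.
  intros x eps Heps; exists eps; split; [exact Heps|].
  intros y [_ Hxy]; simpl in *; unfold R_dist in *.
  pose proof (dist_set_lipschitz x y); pose proof (dist_set_lipschitz y x).
  rewrite Rabs_minus_sym in Hxy.
  apply Rabs_def1; rewrite (Rabs_minus_sym y x) in *; lra.
Qed.

Lemma dist_set_eq0 (x : R) : closed_set E -> dist_set x = 0 <-> E x.
Proof.
  intros closedE; split.
  - intros Hx; apply NNPP; intros nEx.
    destruct (closedE x nEx) as [[delta delta_pos] Hdisc]; simpl in Hdisc.
    enough (delta <= dist_set x) by lra.
    apply dist_set_glb; intros y Ey.
    destruct (Rle_or_lt delta (Rabs (x - y))) as [le | lt]; [exact le|].
    exfalso; apply (Hdisc y); [unfold disc; rewrite Rabs_minus_sym; exact lt | exact Ey].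
  - intros Ex.
    pose proof (dist_set_le x x Ex); pose proof (dist_set_ge0 x).
    rewrite Rminus_diag, Rabs_R0 in *; lra.
Qed.

End DistanceToSet.

Lemma closed_set_zero_set (E : R -> Prop) : closed_set E ->
  exists g : R -> R, continuity g /\ forall x, g x = 0 <-> E x.
Proof.
  intros closedE.
  destruct (classic (exists y, E y)) as [E_inhabited | E_empty].
  - exists (dist_set E E_inhabited); split.
    + apply continuity_dist_set.
    + intros x; apply dist_set_eq0, closedE.
  - exists (fun _ => 1); split.
    + intros x; apply continuity_const; intros a b; reflexivity.
    + intros x; split; [lra | intros Ex; exfalso; eauto].
Qed.

Lemma E_G_hereditary (G : (R -> R) -> Prop) (F : (R -> R) -> Prop) :
  hereditary (E_G G F).
Proof.
  intros D E CD _ DE [_ HE]; split; [exact CD|].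
  intros f Ff; destruct (HE f Ff) as [g [Gg Hg]].
  exists g; split; auto.
Qed.

Lemma hereditary_ext (Es Es' : (R -> Prop) -> Prop) :
  (forall E, Es E <-> Es' E) -> hereditary Es' -> hereditary Es.
Proof. intros HEs Hh D E CD CE DE HE; apply HEs, (Hh D E); auto; apply HEs, HE. Qed.

Definition vanishing_family (Es : (R -> Prop) -> Prop) (g : R -> R) : Prop :=
  Cont g /\ forall E, CL E -> (forall x, E x -> g x = 0) -> Es E.

Lemma E_G_vanishing_family (Es : (R -> Prop) -> Prop) :
  (forall E, Es E -> CL E) -> hereditary Es ->
  forall E, Es E <-> E_G (vanishing_family Es) (eq (fun _ => 0)) E.
Proof.
  intros HEs Hh E; split.
  - intros HE; split; [now apply HEs|].
    intros f <-.
    destruct (closed_set_zero_set E (HEs E HE)) as [g [Cg Hg]].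
    exists g; split.
    + split; [exact Cg|].
      intros E' CE' HE'; apply (Hh E' E CE' (HEs E HE)); auto.
      intros x E'x; apply Hg, HE', E'x.
    + intros x Ex; symmetry; apply Hg, Ex.
  - intros [CE HE].
    destruct (HE (fun _ => 0) eq_refl) as [g [[_ Gg] Hg]].
    apply (Gg E CE); intros x Ex; rewrite <- Hg; auto.
Qed.

Theorem proposition2p3 (Es : (R -> Prop) -> Prop)
  (HEs : forall E, Es E -> CL E) :
  (exists G : (R -> R) -> Prop, (forall g, G g -> Cont g) /\ in_K_G G Es)
  <-> hereditary Es.
Proof.
  split.
  - intros [G [_ [F [_ HK]]]].
    apply (hereditary_ext _ _ HK), E_G_hereditary.
  - intros Hh.
    exists (vanishing_family Es); split; [now intros g []|].
    exists (eq (fun _ => 0)); split.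
    + intros f <- x; apply continuity_const; intros a b; reflexivity.
    + apply E_G_vanishing_family; assumption.
Qed.
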